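(* A $\tau$-equivariant polynomial automorphism of $\mathcal{D}$ extends uniquely to a polynomial automorphism of $\mathcal{M}(2;\mathbb{C})$ compatible with conjugation.
   Context: $\mathcal{D}$ is the set of diagonal $2\times2$ complex matrices, identified with $\mathbb{C}^2$ via $\mathrm{diag}(\lambda_1,\lambda_2)\mapsto(\lambda_1,\lambda_2)$; $\tau(\lambda_1,\lambda_2)=(\lambda_2,\lambda_1)$, and $\tau$-equivariant means commuting with $\tau$. A map $\Phi$ of $\mathcal{M}(2;\mathbb{C})$ is compatible with conjugation if $\mathrm{A}\Phi(\mathrm{M})\mathrm{A}^{-1}=\Phi(\mathrm{A}\mathrm{M}\mathrm{A}^{-1})$ for all $\mathrm{A}\in\mathrm{GL}(2;\mathbb{C})$; the extension restricts to the given automorphism on $\mathcal{D}$. *)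

(* complex numbers C = R[i] for R : realType (i.e. C up to iso),
   polynomial maps via multinomials' {mpoly C[n]}. *)
From HB Require Import structures.
From mathcomp Require Import all_boot all_order all_algebra.
From mathcomp Require Import reals.
From mathcomp Require Import complex.
From mathcomp Require Import mpoly.
Set Implicit Arguments. Unset Strict Implicit. Unset Printing Implicit Defensive.
Import GRing.Theory Num.Theory.
Local Open Scope ring_scope.
Local Open Scope complex_scope.

Section Defs.
Variable R : realType.
Local Notation C := (R[i]).

Definition poly_fun (n : nat) (g : ('I_n -> C) -> C) : Prop :=
  exists p : {mpoly C[n]}, forall x : 'I_n -> C, g x = p.@[x].

(* D identified with C^2 = C * C *)
Definition poly_map2 (f : C * C -> C * C) : Prop :=
  poly_fun (fun x : 'I_2 -> C => (f (x ord0, x (lift ord0 ord0))).1) /\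
  poly_fun (fun x : 'I_2 -> C => (f (x ord0, x (lift ord0 ord0))).2).

Definition poly_auto2 (f : C * C -> C * C) : Prop :=
  poly_map2 f /\ exists g, poly_map2 g /\ cancel f g /\ cancel g f.

Definition tau (l : C * C) : C * C := (l.2, l.1).

(* M(2;C) identified with C^4 via mxvec *)
Definition mx_of_coords (x : 'I_(2 * 2) -> C) : 'M[C]_2 := vec_mx (\row_k x k).

Definition poly_mapM (Phi : 'M[C]_2 -> 'M[C]_2) : Prop :=
  forall i j : 'I_2, poly_fun (fun x => Phi (mx_of_coords x) i j).

Definition poly_autoM (Phi : 'M[C]_2 -> 'M[C]_2) : Prop :=
  poly_mapM Phi /\ exists Psi, poly_mapM Psi /\ cancel Phi Psi /\ cancel Psi Phi.

Definition compat_conj (Phi : 'M[C]_2 -> 'M[C]_2) : Prop :=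
  forall A M : 'M[C]_2, A \in unitmx ->
    A *m Phi M *m invmx A = Phi (A *m M *m invmx A).

Definition diagD (l : C * C) : 'M[C]_2 :=
  diag_mx (\row_(i < 2) if i == ord0 then l.1 else l.2).

End Defs.

From HB Require Import structures.
From mathcomp Require Import all_boot all_order all_algebra.
From mathcomp Require Import boolp reals complex mpoly ring.
Set Implicit Arguments. Unset Strict Implicit. Unset Printing Implicit Defensive.
Import GRing.Theory Num.Theory.
Local Open Scope ring_scope.

(* For a 2x2 matrix, adj M = tr(M) - M commutes with M and acts on
   diag(a, b) as diag(b, a).  Writing f = (p, p o tau), the map
   M |-> p(M, adj M) is therefore polynomial, compatible with conjugation,
   and restricts to f on the diagonal; the same construction for f^-1 gives
   its inverse.  Uniqueness: two such maps agree on diagonalisable upper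
   triangular matrices by conjugation, on all upper triangular ones because
   a polynomial in the (2,2) entry vanishing off one point vanishes, and on
   all matrices since every matrix is conjugate to an upper triangular one. *)

Local Notation i0 := (ord0 : 'I_2).
Local Notation i1 := (lift ord0 ord0 : 'I_2).

Section PolyFun.
Variables (R : realType) (n : nat).
Local Notation C := R[i].
Implicit Types (g h : ('I_n -> C) -> C).

Lemma eq_poly_fun g h : g =1 h -> poly_fun g -> poly_fun h.
Proof. by move=> gh [p gp]; exists p => x; rewrite -gh gp. Qed.

Lemma poly_fun_const (c : C) : poly_fun (fun _ : 'I_n -> C => c).
Proof. by exists c%:MP => x; rewrite mevalC. Qed.

Lemma poly_fun_coord (i : 'I_n) : poly_fun (fun x : 'I_n -> C => x i).
Proof. by exists 'X_i => x; rewrite mevalXU. Qed.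

Lemma poly_funD g h : poly_fun g -> poly_fun h -> poly_fun (fun x => g x + h x).
Proof. by move=> [p gp] [q hq]; exists (p + q) => x; rewrite mevalD gp hq. Qed.

Lemma poly_funN g : poly_fun g -> poly_fun (fun x => - g x).
Proof. by move=> [p gp]; exists (- p) => x; rewrite mevalN gp. Qed.

Lemma poly_funM g h : poly_fun g -> poly_fun h -> poly_fun (fun x => g x * h x).
Proof. by move=> [p gp] [q hq]; exists (p * q) => x; rewrite mevalM gp hq. Qed.

Lemma poly_fun_sum (I : Type) (r : seq I) (G : I -> ('I_n -> C) -> C) :
  (forall i, poly_fun (G i)) -> poly_fun (fun x => \sum_(i <- r) G i x).
Proof.
move=> polyG; elim: r => [|i r IHr].
  by apply: eq_poly_fun (poly_fun_const 0) => x; rewrite big_nil.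
by apply: eq_poly_fun (poly_funD (polyG i) IHr) => x; rewrite big_cons.
Qed.

Lemma poly_fun_line g (a b : 'I_n -> C) : poly_fun g ->
  exists q : {poly C}, forall mu, g (fun i => a i + mu * b i) = q.[mu].
Proof.
move=> [p gp].
exists (\sum_(m <- msupp p) (p@_m)%:P * \prod_(i < n) ((a i)%:P + 'X * (b i)%:P) ^+ m i).
move=> mu; rewrite gp mevalE horner_sum; apply: eq_bigr => m _.
rewrite hornerM hornerC horner_prod; congr (_ * _); apply: eq_bigr => i _.
by rewrite horner_exp hornerD hornerC hornerM hornerX hornerC.
Qed.

Definition poly_mx (k l : nat) (F : ('I_n -> C) -> 'M[C]_(k, l)) : Prop :=
  forall i j, poly_fun (fun x => F x i j).

Lemma poly_mx_const (k l : nat) (A : 'M[C]_(k, l)) : poly_mx (fun _ => A).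
Proof. by move=> i j; apply: poly_fun_const. Qed.

Lemma poly_mxD (k l : nat) (F G : ('I_n -> C) -> 'M[C]_(k, l)) :
  poly_mx F -> poly_mx G -> poly_mx (fun x => F x + G x).
Proof.
by move=> polyF polyG i j; apply: eq_poly_fun (poly_funD (polyF i j) (polyG i j)) => x; rewrite mxE.
Qed.

Lemma poly_mxN (k l : nat) (F : ('I_n -> C) -> 'M[C]_(k, l)) :
  poly_mx F -> poly_mx (fun x => - F x).
Proof. by move=> polyF i j; apply: eq_poly_fun (poly_funN (polyF i j)) => x; rewrite mxE. Qed.

Lemma poly_mxM (k l m : nat) (F : ('I_n -> C) -> 'M[C]_(k, l)) (G : ('I_n -> C) -> 'M[C]_(l, m)) :
  poly_mx F -> poly_mx G -> poly_mx (fun x => F x *m G x).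
Proof.
move=> polyF polyG i j.
have := poly_fun_sum (index_enum 'I_l) (fun t => poly_funM (polyF i t) (polyG t j)).
by apply: eq_poly_fun => x; rewrite mxE.
Qed.

Lemma poly_mxZ (k l : nat) (s : ('I_n -> C) -> C) (F : ('I_n -> C) -> 'M[C]_(k, l)) :
  poly_fun s -> poly_mx F -> poly_mx (fun x => s x *: F x).
Proof. by move=> polys polyF i j; apply: eq_poly_fun (poly_funM polys (polyF i j)) => x; rewrite mxE. Qed.

Lemma poly_mx_scalar (k : nat) (s : ('I_n -> C) -> C) :
  poly_fun s -> poly_mx (fun x => (s x)%:M : 'M[C]_k).
Proof.
move=> polys i j; apply: eq_poly_fun (poly_funM polys (poly_fun_const (1%:M i j))) => x.
by rewrite !mxE mulr_natr.
Qed.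

Lemma poly_mxX (k : nat) (F : ('I_n -> C) -> 'M[C]_k) (e : nat) :
  poly_mx F -> poly_mx (fun x => F x ^+ e).
Proof.
move=> polyF; elim: e => [|e IHe]; first exact: poly_mx_const.
by move=> i j; apply: eq_poly_fun (poly_mxM polyF IHe i j) => x; rewrite exprS.
Qed.

Lemma poly_mx_sum (k l : nat) (I : Type) (r : seq I) (F : I -> ('I_n -> C) -> 'M[C]_(k, l)) :
  (forall t, poly_mx (F t)) -> poly_mx (fun x => \sum_(t <- r) F t x).
Proof.
move=> polyF i j; have := poly_fun_sum r (fun t => polyF t i j).
by apply: eq_poly_fun => x; rewrite summxE.
Qed.

Lemma poly_fun_trace (k : nat) (F : ('I_n -> C) -> 'M[C]_k) :
  poly_mx F -> poly_fun (fun x => \tr (F x)).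
Proof. by move=> polyF; apply: poly_fun_sum => i; apply: polyF. Qed.

End PolyFun.

Lemma poly_eq0_off (F : numFieldType) (a : F) (q : {poly F}) :
  (forall x, x != a -> q.[x] = 0) -> q = 0.
Proof.
move=> q0; pose rs := [seq a + k.+1%:R | k <- iota 0 (size q)].
apply: (@roots_geq_poly_eq0 _ q rs); last by rewrite size_map size_iota.
- apply/allP => _ /mapP [k _ ->]; apply/rootP/q0.
  by rewrite -subr_eq0 addrAC subrr add0r pnatr_eq0.
- rewrite map_inj_uniq ?iota_uniq // => k l /addrI /eqP.
  by rewrite eqr_nat => /eqP [].
Qed.

Section Matrix2.
Variable F : comNzRingType.

Definition mx2 (a b c d : F) : 'M[F]_2 :=
  \matrix_(i, j) if i == i0 then (if j == i0 then a else b)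
                 else (if j == i0 then c else d).

Lemma mx2_eq (A B : 'M[F]_2) : A i0 i0 = B i0 i0 -> A i0 i1 = B i0 i1 ->
  A i1 i0 = B i1 i0 -> A i1 i1 = B i1 i1 -> A = B.
Proof.
have ord2P (i : 'I_2) : i = i0 \/ i = i1.
  by case: i => [[|[|//]] ?]; [left | right]; apply/val_inj.
move=> e00 e01 e10 e11; apply/matrixP => i j.
by case: (ord2P i) => ->; case: (ord2P j) => ->.
Qed.

Lemma mulmx2E (A B : 'M[F]_2) i j : (A *m B) i j = A i i0 * B i0 j + A i i1 * B i1 j.
Proof. by rewrite mxE big_ord_recl big_ord_recl big_ord0 addr0. Qed.

Lemma mxtrace2E (A : 'M[F]_2) : \tr A = A i0 i0 + A i1 i1.
Proof. by rewrite /mxtrace big_ord_recl big_ord_recl big_ord0 addr0. Qed.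

(* The adjugate of a 2x2 matrix, by Cayley-Hamilton. *)
Definition adj2 (M : 'M[F]_2) : 'M[F]_2 := (\tr M)%:M - M.

End Matrix2.

Section Conjugation.
Variables (F : comUnitRingType) (n : nat) (A : 'M[F]_n).

Definition conj_by (X : 'M[F]_n) : 'M[F]_n := A *m X *m invmx A.

Hypothesis unitA : A \in unitmx.

Lemma conj_byM (X Y : 'M[F]_n) : conj_by (X *m Y) = conj_by X *m conj_by Y.
Proof. by rewrite /conj_by !mulmxA -(mulmxA (A *m X) (invmx A) A) mulVmx // mulmx1. Qed.

Lemma conj_byD (X Y : 'M[F]_n) : conj_by (X + Y) = conj_by X + conj_by Y.
Proof. by rewrite /conj_by mulmxDr mulmxDl. Qed.

Lemma conj_byN (X : 'M[F]_n) : conj_by (- X) = - conj_by X.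
Proof. by rewrite /conj_by mulmxN mulNmx. Qed.

Lemma conj_byZ (c : F) (X : 'M[F]_n) : conj_by (c *: X) = c *: conj_by X.
Proof. by rewrite /conj_by -scalemxAr -scalemxAl. Qed.

Lemma conj_by_scalar (c : F) : conj_by c%:M = c%:M.
Proof. by rewrite /conj_by scalar_mxC -mulmxA mulmxV // mul_scalar_mx scalemx1. Qed.

Lemma conj_byX (X : 'M[F]_n) (e : nat) : conj_by (X ^+ e) = conj_by X ^+ e.
Proof.
elim: e => [|e IHe]; first by rewrite !expr0 conj_by_scalar.
by rewrite !exprS -!mulmxE conj_byM IHe.
Qed.

Lemma mxtrace_conj_by (X : 'M[F]_n) : \tr (conj_by X) = \tr X.
Proof. by rewrite /conj_by mxtrace_mulC mulmxA mulVmx // mul1mx. Qed.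

Lemma conj_by_sum (I : Type) (r : seq I) (G : I -> 'M[F]_n) :
  conj_by (\sum_(i <- r) G i) = \sum_(i <- r) conj_by (G i).
Proof.
elim: r => [|i r IHr]; first by rewrite !big_nil /conj_by mulmx0 mul0mx.
by rewrite !big_cons conj_byD IHr.
Qed.

End Conjugation.

Lemma conj_by_adj2 (F : comUnitRingType) (A M : 'M[F]_2) : A \in unitmx ->
  conj_by A (adj2 M) = adj2 (conj_by A M).
Proof. by move=> unitA; rewrite /adj2 conj_byD conj_byN conj_by_scalar // mxtrace_conj_by. Qed.

Section Extension.
Variable R : realType.
Local Notation C := R[i].

Lemma poly_mx_coords : poly_mx (@mx_of_coords R).
Proof.
move=> i j; apply: eq_poly_fun (poly_fun_coord R (mxvec_index i j)) => x.
by rewrite /mx_of_coords /vec_mx !mxE.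
Qed.

Lemma mx_of_coords_line (lam c mu : C) :
  mx_of_coords (fun k => mxvec (mx2 lam c 0 0) 0 k + mu * mxvec (mx2 0 0 0 1) 0 k)
  = mx2 lam c 0 mu.
Proof.
rewrite /mx_of_coords (_ : \row_k _ = mxvec (mx2 lam c 0 0 + mu *: mx2 0 0 0 1)).
  by rewrite mxvecK; apply: mx2_eq; rewrite !mxE /=; ring.
by apply/rowP => k; rewrite linearD linearZ !mxE.
Qed.

Lemma diagDE (l : C * C) : diagD l = mx2 l.1 0 0 l.2.
Proof. by apply: mx2_eq; rewrite !mxE. Qed.

Lemma diagDM (l l' : C * C) : diagD l *m diagD l' = diagD (l.1 * l'.1, l.2 * l'.2).
Proof. by rewrite !diagDE; apply: mx2_eq; rewrite !mulmx2E !mxE /=; ring. Qed.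

Lemma diagDX (l : C * C) (e : nat) : diagD l ^+ e = diagD (l.1 ^+ e, l.2 ^+ e).
Proof.
elim: e => [|e IHe]; first by rewrite expr0 !diagDE; apply: mx2_eq; rewrite !mxE.
by rewrite exprS -mulmxE IHe diagDM -!exprS.
Qed.

Lemma diagDZ (c : C) (l : C * C) : c *: diagD l = diagD (c * l.1, c * l.2).
Proof. by rewrite !diagDE; apply: mx2_eq; rewrite !mxE /= ?mulr0. Qed.

Lemma diagD_sum (I : Type) (r : seq I) (G : I -> C * C) :
  \sum_(i <- r) diagD (G i) = diagD (\sum_(i <- r) (G i).1, \sum_(i <- r) (G i).2).
Proof.
elim: r => [|i r IHr]; first by rewrite !big_nil diagDE; apply: mx2_eq; rewrite !mxE.
by rewrite !big_cons IHr !diagDE; apply: mx2_eq; rewrite !mxE /= ?addr0.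
Qed.

Lemma adj2_diagD (l : C * C) : adj2 (diagD l) = diagD (tau l).
Proof. by rewrite /adj2 mxtrace2E !diagDE; apply: mx2_eq; rewrite !mxE /=; ring. Qed.

(* [p] evaluated at the commuting pair [(M, adj2 M)]. *)
Definition meval_adj (p : {mpoly C[2]}) (M : 'M[C]_2) : 'M[C]_2 :=
  \sum_(m <- msupp p) p@_m *: (M ^+ m i0 *m adj2 M ^+ m i1).

Lemma poly_mx_meval_adj (p : {mpoly C[2]}) (F : ('I_(2 * 2) -> C) -> 'M[C]_2) :
  poly_mx F -> poly_mx (fun x => meval_adj p (F x)).
Proof.
move=> polyF; apply: poly_mx_sum => m; apply/poly_mxZ/poly_mxM; first exact: poly_fun_const.
  exact: poly_mxX.
apply/poly_mxX/poly_mxD; last exact: poly_mxN.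
exact/poly_mx_scalar/poly_fun_trace.
Qed.

Lemma compat_conj_meval_adj (p : {mpoly C[2]}) : compat_conj (meval_adj p).
Proof.
move=> A M unitA; change (conj_by A (meval_adj p M) = meval_adj p (conj_by A M)).
rewrite /meval_adj conj_by_sum; apply: eq_bigr => m _.
by rewrite conj_byZ conj_byM // (conj_byX unitA M) (conj_byX unitA (adj2 M)) conj_by_adj2.
Qed.

Lemma meval_adj_diagD (p : {mpoly C[2]}) (l : C * C) :
  meval_adj p (diagD l) =
  diagD (p.@[fun i => if i == i0 then l.1 else l.2],
         p.@[fun i => if i == i0 then l.2 else l.1]).
Proof.
rewrite /meval_adj adj2_diagD.
under eq_bigr do rewrite !diagDX diagDM diagDZ.
rewrite diagD_sum !mevalE /=; congr (diagD (_, _)); apply: eq_bigr => m _;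
  by rewrite big_ord_recl big_ord_recl big_ord0 mulr1.
Qed.

Lemma meval_adj_diagD_equivariant (f : C * C -> C * C) (p : {mpoly C[2]}) :
  (forall x : 'I_2 -> C, (f (x i0, x i1)).1 = p.@[x]) ->
  (forall l, f (tau l) = tau (f l)) ->
  forall l, meval_adj p (diagD l) = diagD (f l).
Proof.
move=> fp f_tau [a b]; rewrite meval_adj_diagD -!fp /=.
by rewrite (_ : (b, a) = tau (a, b)) // f_tau; case: (f (a, b)).
Qed.

End Extension.

Section Uniqueness.
Variable R : realType.
Local Notation C := R[i].
Variables Phi1 Phi2 : 'M[C]_2 -> 'M[C]_2.
Hypotheses (poly1 : poly_mapM Phi1) (poly2 : poly_mapM Phi2).
Hypotheses (conj1 : compat_conj Phi1) (conj2 : compat_conj Phi2).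
Hypothesis eq_diag : forall l, Phi1 (diagD l) = Phi2 (diagD l).

Lemma eq_similar (M A T : 'M[C]_2) : A \in unitmx -> M *m A = A *m T ->
  Phi1 T = Phi2 T -> Phi1 M = Phi2 M.
Proof.
move=> unitA MA_AT eqT.
have -> : M = A *m T *m invmx A by rewrite -MA_AT mulmxK.
by rewrite -conj1 // -conj2 // eqT.
Qed.

Lemma eq_triu_distinct (lam mu c : C) : lam != mu ->
  Phi1 (mx2 lam c 0 mu) = Phi2 (mx2 lam c 0 mu).
Proof.
move=> lam_mu; have dmu : mu - lam != 0 by rewrite subr_eq0 eq_sym.
apply: (@eq_similar _ (mx2 1 c 0 (mu - lam)) (diagD (lam, mu))) => //.
- suff /mulmx1_unit[] : mx2 1 c 0 (mu - lam) *m ((mu - lam)^-1 *: mx2 (mu - lam) (- c) 0 1)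
      = 1%:M by [].
  by apply: mx2_eq; rewrite !mulmx2E !mxE /=; field.
- by rewrite diagDE; apply: mx2_eq; rewrite !mulmx2E !mxE /=; ring.
Qed.

Lemma eq_triu (lam mu c : C) : Phi1 (mx2 lam c 0 mu) = Phi2 (mx2 lam c 0 mu).
Proof.
have [<-|] := eqVneq lam mu; last exact: eq_triu_distinct.
apply/matrixP => i j.
pose a := mxvec (mx2 lam c 0 0) 0; pose b := mxvec (mx2 (0 : C) 0 0 1) 0.
have [q1 q1E] := poly_fun_line a b (poly1 i j).
have [q2 q2E] := poly_fun_line a b (poly2 i j).
have {}q1E nu : Phi1 (mx2 lam c 0 nu) i j = q1.[nu] by rewrite -mx_of_coords_line q1E.
have {}q2E nu : Phi2 (mx2 lam c 0 nu) i j = q2.[nu] by rewrite -mx_of_coords_line q2E.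
suff /eqP : q1 - q2 = 0 by rewrite subr_eq0 q1E q2E => /eqP ->.
apply: (poly_eq0_off (a := lam)) => nu nu_lam.
by rewrite hornerD hornerN -q1E -q2E eq_triu_distinct ?subrr // eq_sym.
Qed.

Lemma eq_on_diag_compat_conj M : Phi1 M = Phi2 M.
Proof.
set a := M i0 i0; set b := M i0 i1; set c := M i1 i0; set d := M i1 i1.
have ME : M = mx2 a b c d by apply: mx2_eq; rewrite !mxE.
have [c0|c_neq0] := eqVneq c 0; first by rewrite ME c0 eq_triu.
pose s := sqrtc ((a + d) ^+ 2 - 4 * (a * d - b * c)).
have sE : s ^+ 2 = (a + d) ^+ 2 - 4 * (a * d - b * c) by apply: sqr_sqrtc.
pose lam := (a + d + s) / 2.
have lam_eigen : lam ^+ 2 - (a + d) * lam + (a * d - b * c) = 0.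
  rewrite (_ : _ + _ = (s ^+ 2 - ((a + d) ^+ 2 - 4 * (a * d - b * c))) / 4).
    by rewrite sE subrr mul0r.
  by rewrite /lam; field.
(* The columns of the conjugating matrix are an eigenvector for [lam] and (1, 0). *)
apply: (@eq_similar _ (mx2 (lam - d) 1 c 0) (mx2 lam 1 0 (a + d - lam))).
- suff /mulmx1_unit[] : mx2 (lam - d) 1 c 0 *m (c^-1 *: mx2 0 1 c (d - lam)) = 1%:M by [].
  by apply: mx2_eq; rewrite !mulmx2E !mxE /=; field.
- rewrite ME; apply: mx2_eq; rewrite !mulmx2E !mxE /=; try ring.
  apply/eqP; rewrite -subr_eq0 -oppr_eq0; apply/eqP.
  by rewrite -[RHS]lam_eigen; ring.
- exact: eq_triu.
Qed.

End Uniqueness.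

Lemma meval_adj_cancel (R : realType) (p q : {mpoly R[i][2]}) :
  (forall l, meval_adj q (meval_adj p (diagD l)) = diagD l) ->
  cancel (meval_adj p) (meval_adj q).
Proof.
move=> qp_diag M.
apply: (eq_on_diag_compat_conj (Phi1 := meval_adj q \o meval_adj p) (Phi2 := id)) => //.
- exact/poly_mx_meval_adj/poly_mx_meval_adj/poly_mx_coords.
- exact: poly_mx_coords.
- by move=> A N unitA; rewrite !compat_conj_meval_adj.
Qed.

Theorem corollary2p5 (R : realType) (f : R[i] * R[i] -> R[i] * R[i]) :
  poly_auto2 f ->
  (forall l, f (tau l) = tau (f l)) ->
  exists! Phi : 'M[R[i]]_2 -> 'M[R[i]]_2,
    poly_autoM Phi /\ compat_conj Phi /\
    (forall l, Phi (diagD l) = diagD (f l)).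
Proof.
move=> [[[p fp] _] [g [[[q gq] _] [fK gK]]]] f_tau.
have g_tau l : g (tau l) = tau (g l) by rewrite -{1}(gK l) -f_tau fK.
have pE := meval_adj_diagD_equivariant fp f_tau.
have qE := meval_adj_diagD_equivariant gq g_tau.
have poly_meval_adj r : poly_mapM (meval_adj r).
  exact/poly_mx_meval_adj/poly_mx_coords.
exists (meval_adj p); split.
  split; last by split; [exact: compat_conj_meval_adj | exact: pE].
  split; first exact: poly_meval_adj.
  exists (meval_adj q); split; first exact: poly_meval_adj.
  by split; apply: meval_adj_cancel => l; [rewrite pE qE fK | rewrite qE pE gK].
move=> Phi [[polyPhi _] [conjPhi PhiE]].
apply: funext => M; apply: eq_on_diag_compat_conj => //.
- exact: compat_conj_meval_adj.
- by move=> l; rewrite pE PhiE.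
Qed.
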